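(* Let $M$ be a structure and let $(\bar a_i,\bar b_i : i\in\mathbb Q)$ be a family of tuples in $M$ (all $\bar a_i$ of the same length, all $\bar b_i$ of the same length) which, viewed as indexed by $G_*$, is $L^*$-indiscernible. Then either the two sequences $(\bar a_i : i\in\mathbb Q)$ and $(\bar b_i : i\in\mathbb Q)$ are mutually indiscernible, or there is a formula $\phi(\bar x;\bar y)$ with parameters from $\{\bar a_i,\bar b_i : i\in\mathbb Q\}$, where $|\bar x|=|\bar a_i|$ and $|\bar y|=|\bar b_i|$, which has the independence property.
   Context: Let $L^*=\{U,\le_U,V,\le_V,R\}$ with $U,V$ unary and $\le_U,\le_V,R$ binary. An ordered bipartite graph is an $L^*$-structure $G$ in which $U,V$ partition the domain, $\le_U\subseteq U^2$ and $\le_V\subseteq V^2$ are linear orders on $U(G)$ and $V(G)$ respectively, and $R\subseteq U\times V$. $G_*$ denotes the random ordered bipartite graph, i.e. the countable Fraïssé limit of the class of finite ordered bipartite graphs; $(U(G_* ),\le_U)$ and $(V(G_* ),\le_V)$ are countable dense linear orders without endpoints, and we fix identifications of each with $(\mathbb Q,\le)$. A family $(\bar a_i,\bar b_i : i\in\mathbb Q)$ is viewed as indexed by $G_*$ by sending $i\in U(G_* )\cong\mathbb Q$ to $\bar a_i$ and $j\in V(G_* )\cong\mathbb Q$ to $\bar b_j$. For an $L^*$-structure $I$, a family $(\bar c_t : t\in I)$ in an $L$-structure $M$ is $L^*$-indiscernible if whenever $(t_1,\dots,t_n)$ and $(s_1,\dots,s_n)$ have the same quantifier-free $L^*$-type in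 $I$, the tuples $(\bar c_{t_1},\dots,\bar c_{t_n})$ and $(\bar c_{s_1},\dots,\bar c_{s_n})$ have the same $L$-type in $M$. Two sequences $(\bar a_i:i\in\mathbb Q)$ and $(\bar b_i:i\in\mathbb Q)$ are mutually indiscernible if each is an order-indiscernible sequence over the set of parameters appearing in the other. A formula $\phi(\bar x;\bar y)$ (possibly with parameters from $M$) has the independence property if in some elementary extension of $M$ there are $(\bar c_i:i\in\omega)$ and $(\bar d_S:S\subseteq\omega)$ with $\models\phi(\bar c_i;\bar d_S)\iff i\in S$. *)

From HB Require Import structures.
From mathcomp Require Import all_boot all_order all_algebra.
Set Implicit Arguments. Unset Strict Implicit. Unset Printing Implicit Defensive.
Import Order.TTheory GRing.Theory Num.Theory.
Local Open Scope ring_scope.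

Record language := Language {
  Fsym : Type; far : Fsym -> nat;
  Rsym : Type; rar : Rsym -> nat }.

Inductive term (L : language) : Type :=
  | Var : nat -> term L
  | App : forall f : Fsym L, ('I_(far f) -> term L) -> term L.

Inductive formula (L : language) : Type :=
  | Eqf : term L -> term L -> formula L
  | Relf : forall r : Rsym L, ('I_(rar r) -> term L) -> formula L
  | Negf : formula L -> formula L
  | Andf : formula L -> formula L -> formula L
  | Exf : nat -> formula L -> formula L.

Record structure (L : language) := Structure {
  carrier :> Type;
  fint : forall f : Fsym L, ('I_(far f) -> carrier) -> carrier;
  rint : forall r : Rsym L, ('I_(rar r) -> carrier) -> Prop }.

Definition upd {M : Type} (v : nat -> M) (n : nat) (m : M) : nat -> M :=
  fun k => if k == n then m else v k.

Fixpoint teval (L : language) (M : structure L) (v : nat -> M) (t : term L) : M :=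
  match t with
  | Var n => v n
  | App f ts => @fint L M f (fun i => teval v (ts i))
  end.

Fixpoint sat (L : language) (M : structure L) (v : nat -> M) (phi : formula L) : Prop :=
  match phi with
  | Eqf t u => teval v t = teval v u
  | Relf r ts => @rint L M r (fun i => teval v (ts i))
  | Negf p => ~ sat v p
  | Andf p q => sat v p /\ sat v q
  | Exf n p => exists m : M, sat (upd v n m) p
  end.

Fixpoint tfree (L : language) (k : nat) (t : term L) : Prop :=
  match t with
  | Var n => n = k
  | App f ts => exists i, tfree k (ts i)
  end.

Fixpoint ffree (L : language) (k : nat) (phi : formula L) : Prop :=
  match phi with
  | Eqf t u => tfree k t \/ tfree k u
  | Relf r ts => exists i, tfree k (ts i)
  | Negf p => ffree k p
  | Andf p q => ffree k p \/ ffree k q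
  | Exf n p => k <> n /\ ffree k p
  end.

Definition ext {M : Type} (x : seq M) (p : nat -> M) : nat -> M :=
  fun k => nth (p k) x k.

(* x and y (finite tuples) have the same L-type over the parameter set P:
   for every formula whose free variables are among x_0..x_{|x|-1} plus
   further variables interpreted by parameters from P. *)
Definition tp_eq_over (L : language) (M : structure L) (P : M -> Prop)
  (x y : seq M) : Prop :=
  size x = size y /\
  forall (phi : formula L) (p : nat -> M),
    (forall k, (size x <= k)%N -> ffree k phi -> P (p k)) ->
    (sat (ext x p) phi <-> sat (ext y p) phi).

Definition tp_eq (L : language) (M : structure L) (x y : seq M) : Prop :=
  tp_eq_over (fun _ => False) x y.

Definition concat_fam {I M : Type} (c : I -> seq M) (n : nat) (t : 'I_n -> I) : seq M :=
  flatten [seq c (t k) | k <- enum 'I_n].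

Definition indisc_over (L : language) (M : structure L) (P : M -> Prop)
  (m : nat) (a : rat -> m.-tuple M) : Prop :=
  forall (n : nat) (i j : 'I_n -> rat),
    (forall k l : 'I_n, (k < l)%N -> i k < i l) ->
    (forall k l : 'I_n, (k < l)%N -> j k < j l) ->
    tp_eq_over P (concat_fam (fun q => tval (a q)) i)
                 (concat_fam (fun q => tval (a q)) j).

Definition params_of {M : Type} (m : nat) (a : rat -> m.-tuple M) : M -> Prop :=
  fun x => exists (i : rat) (k : 'I_m), x = tnth (a i) k.

Definition mutually_indisc (L : language) (M : structure L)
  (na nb : nat) (a : rat -> na.-tuple M) (b : rat -> nb.-tuple M) : Prop :=
  indisc_over (params_of b) a /\ indisc_over (params_of a) b.

Definition elementary (L : language) (M N : structure L) (e : M -> N) : Prop :=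
  forall (phi : formula L) (v : nat -> M), sat v phi <-> sat (fun k => e (v k)) phi.

(* phi(x;y) with |x| = na, |y| = nb: the variables x_0..x_{na-1} are xbar,
   x_na..x_{na+nb-1} are ybar, and every other free variable x_k is a
   parameter p k from M. *)
Definition has_IP (L : language) (M : structure L) (na nb : nat)
  (phi : formula L) (p : nat -> M) : Prop :=
  exists (N : structure L) (e : M -> N), elementary e /\
  exists (c : nat -> na.-tuple N) (d : (nat -> Prop) -> nb.-tuple N),
    forall (i : nat) (S : nat -> Prop),
      sat (ext (tval (c i) ++ tval (d S)) (fun k => e (p k))) phi <-> S i.

(* U(G_* ) and V(G_* ) are both identified with (Q, <=); R : U x V.
   G_* is (up to the choice of identifications) the unique countable
   ordered bipartite graph with DLO sorts and the extension property below. *)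
Definition random_obg (R : rat -> rat -> Prop) : Prop :=
  (forall (l h : rat), l < h -> forall B1 B2 : seq rat,
     (forall x, x \in B1 -> x \in B2 -> False) ->
     exists u, l < u < h /\ (forall y, y \in B1 -> R u y) /\
                            (forall y, y \in B2 -> ~ R u y)) /\
  (forall (l h : rat), l < h -> forall A1 A2 : seq rat,
     (forall x, x \in A1 -> x \in A2 -> False) ->
     exists v, l < v < h /\ (forall x, x \in A1 -> R x v) /\
                            (forall x, x \in A2 -> ~ R x v)).

(* points of G_*: inl q is q in U, inr q is q in V *)
Definition point := (rat + rat)%type.

Definition isU (p : point) : Prop := if p is inl _ then True else False.

Definition le_pt (p q : point) : Prop :=
  match p, q with
  | inl x, inl y => x <= y
  | inr x, inr y => x <= y
  | _, _ => False
  end.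

Definition R_pt (R : rat -> rat -> Prop) (p q : point) : Prop :=
  match p, q with
  | inl x, inr y => R x y
  | _, _ => False
  end.

Definition qf_eq (R : rat -> rat -> Prop) (n : nat) (t s : 'I_n -> point) : Prop :=
  forall k l : 'I_n,
    (isU (t k) <-> isU (s k)) /\
    (t k = t l <-> s k = s l) /\
    (le_pt (t k) (t l) <-> le_pt (s k) (s l)) /\
    (R_pt R (t k) (t l) <-> R_pt R (s k) (s l)).

Definition fam_tuple {M : Type} (na nb : nat) (a : rat -> na.-tuple M)
  (b : rat -> nb.-tuple M) (p : point) : seq M :=
  match p with inl q => tval (a q) | inr q => tval (b q) end.

Definition Lstar_indisc (L : language) (M : structure L) (R : rat -> rat -> Prop)
  (na nb : nat) (a : rat -> na.-tuple M) (b : rat -> nb.-tuple M) : Prop :=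
  forall (n : nat) (t s : 'I_n -> point), qf_eq R t s ->
    tp_eq (concat_fam (fam_tuple a b) t) (concat_fam (fam_tuple a b) s).

(* Suppose (a_i) is not indiscernible over the b_j: some formula with parameters
   from finitely many b_w distinguishes a_(i_1) ... a_(i_n) from a_(j_1) ... a_(j_n)
   for two increasing index tuples.  By L*-indiscernibility the truth value only
   depends on the quantifier-free type of the indices in G_*, i.e. on the edges
   between the U-indices and the parameter indices w.  Using the extension property
   of G_*, move from the edge pattern of i to that of j one edge at a time: some
   single edge (u_k, w) changes the truth value.  Freezing all other tuples as
   parameters yields psi(x; y) with psi(a_u; b_v) <-> R(u, v) for all u, v in a box
   with prescribed edges to the frozen indices.  The extension property realizes
   every finite bipartite pattern inside such a box, and an ultrapower of M realizes
   all of them at once, so psi has the independence property.  The case where (b_j)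
   is not indiscernible over the a_i is symmetric. *)

From mathcomp Require Import all_boot all_order all_algebra zify.
From mathcomp Require boolp filter.
From Stdlib Require Import Classical ClassicalEpsilon.
From Stdlib Require Import FunctionalExtensionality PropExtensionality ProofIrrelevance.
Set Implicit Arguments. Unset Strict Implicit. Unset Printing Implicit Defensive.
Import Order.TTheory GRing.Theory Num.Theory.

Section Syntax.
Variable L : language.

Lemma teval_ext (M : structure L) (v w : nat -> M) (t : term L) :
  (forall k, tfree k t -> v k = w k) -> teval v t = teval w t.
Proof.
elim: t => [n|f ts IH] /= H; first exact: H.
f_equal; apply: functional_extensionality => i.
by apply: IH => k Hk; apply: H; exists i.
Qed.

Lemma sat_ext (M : structure L) (phi : formula L) (v w : nat -> M) :
  (forall k, ffree k phi -> v k = w k) -> (sat v phi <-> sat w phi).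
Proof.
elim: phi v w => [t u|r ts|p IH|p IHp q IHq|n p IH] v w H /=.
- by rewrite (@teval_ext _ v w t) ?(@teval_ext _ v w u) // => k Hk; apply: H; [right|left].
- have -> // : (fun i => teval v (ts i)) = (fun i => teval w (ts i)).
  apply: functional_extensionality => i; apply: teval_ext => k Hk; apply: H; by exists i.
- by rewrite (IH v w H).
- by rewrite (IHp v w) ?(IHq v w) // => k Hk; apply: H; [right|left].
- have E m : sat (upd v n m) p <-> sat (upd w n m) p.
    apply: IH => k Hk; rewrite /upd; case: eqP => // /eqP kn.
    by apply: H; split => //; apply/eqP.
  by split=> -[m Hm]; exists m; apply/E.
Qed.

Fixpoint tbound (t : term L) : nat :=
  match t with
  | Var n => n.+1
  | App f ts => \max_(i < far f) tbound (ts i)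
  end.

Fixpoint fbound (phi : formula L) : nat :=
  match phi with
  | Eqf t u => maxn (tbound t) (tbound u)
  | Relf r ts => \max_(i < rar r) tbound (ts i)
  | Negf p => fbound p
  | Andf p q => maxn (fbound p) (fbound q)
  | Exf n p => fbound p
  end.

Lemma tfree_lt_tbound t k : tfree k t -> k < tbound t.
Proof.
elim: t => [n|f ts IH] /=; first by move=> ->.
by move=> [i /IH Hi]; apply: leq_trans Hi (@leq_bigmax _ (fun i => tbound (ts i)) i).
Qed.

Lemma ffree_lt_fbound phi k : ffree k phi -> k < fbound phi.
Proof.
elim: phi => [t u|r ts|p IH|p IHp q IHq|n p IH] /=.
- by case=> /tfree_lt_tbound H; rewrite leq_max H ?orbT.
- by move=> [i /tfree_lt_tbound Hi]; apply: leq_trans Hi (@leq_bigmax _ (fun i => tbound (ts i)) i).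
- exact: IH.
- by case=> [/IHp|/IHq] H; rewrite leq_max H ?orbT.
- by case=> _ /IH.
Qed.

Fixpoint tren (r : nat -> nat) (t : term L) : term L :=
  match t with
  | Var n => Var L (r n)
  | App f ts => App (fun i => tren r (ts i))
  end.

(* Bound variables x_n are moved to x_(B + n), out of the range [0, B) that
   the renaming is meant to hit on free variables. *)
Fixpoint fren (B : nat) (r : nat -> nat) (phi : formula L) : formula L :=
  match phi with
  | Eqf t u => Eqf (tren r t) (tren r u)
  | Relf rr ts => Relf (fun i => tren r (ts i))
  | Negf p => Negf (fren B r p)
  | Andf p q => Andf (fren B r p) (fren B r q)
  | Exf n p => Exf (B + n) (fren B (fun k => if k == n then B + n else r k) p)
  end.

Lemma teval_tren (M : structure L) (v : nat -> M) r t :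
  teval v (tren r t) = teval (v \o r) t.
Proof.
elim: t => [n|f ts IH] //=; f_equal; exact: functional_extensionality.
Qed.

Lemma tfree_tren r t k : tfree k (tren r t) -> exists2 j, tfree j t & k = r j.
Proof.
elim: t => [n|f ts IH] /=; first by move=> <-; exists n.
by move=> [i /IH [j Hj ->]]; exists j => //; exists i.
Qed.

Lemma ffree_fren B r phi k : ffree k (fren B r phi) -> exists2 j, ffree j phi & k = r j.
Proof.
elim: phi r k => [t u|rr ts|p IH|p IHp q IHq|n p IH] r k /=.
- by case=> /tfree_tren [j Hj ->]; exists j => //; [left|right].
- by move=> [i /tfree_tren [j Hj ->]]; exists j => //; exists i.
- exact: IH.
- by case=> [/IHp|/IHq] [j Hj ->]; exists j => //; [left|right].
- move=> [kn /IH [j Hj]]; case: eqP => [_ /esym //|/eqP jn ->].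
  by exists j => //; split => //; apply/eqP.
Qed.

Lemma sat_fren_gen (M : structure L) B phi (r : nat -> nat) (v : nat -> M) :
  (forall k, ffree k phi -> r k < B \/ r k = B + k) ->
  (sat v (fren B r phi) <-> sat (v \o r) phi).
Proof.
elim: phi r v => [t u|rr ts|p IH|p IHp q IHq|n p IH] r v H /=.
- by rewrite !teval_tren.
- suff -> : (fun i => teval v (tren r (ts i))) = (fun i => teval (v \o r) (ts i)) by [].
  by apply: functional_extensionality => i; exact: teval_tren.
- by rewrite IH.
- by rewrite IHp ?IHq // => k Hk; apply: H; [right|left].
- pose r' k := if k == n then B + n else r k.
  have E m : sat (upd v (B + n) m) (fren B r' p) <-> sat (upd (v \o r) n m) p.
    rewrite IH; last first.
      move=> k Hk; rewrite /r'; case: (eqVneq k n) => [->|kn]; first by right.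
      by apply: H; split => //; apply/eqP.
    apply: sat_ext => k Hk; rewrite /upd /r' /=; case: (eqVneq k n) => [_|kn].
      by rewrite eqxx.
    case: (H k) => [|rk|->]; first by split => //; apply/eqP.
    + by rewrite ltn_eqF //; lia.
    + by rewrite eqn_add2l (negbTE kn).
  by split=> -[m Hm]; exists m; apply/E.
Qed.

Lemma sat_fren (M : structure L) B phi (r : nat -> nat) (v w : nat -> M) :
  (forall k, ffree k phi -> r k < B /\ v (r k) = w k) ->
  (sat v (fren B r phi) <-> sat w phi).
Proof.
move=> H; rewrite sat_fren_gen => [|k /H [] //]; last by left.
by apply: sat_ext => k /H [].
Qed.

End Syntax.

Lemma swap_blocks (L : language) (phi : formula L) (na nb : nat) :
  exists psi : formula L, (forall k, na + nb <= k -> ffree k psi -> ffree k phi) /\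
    forall (M : structure L) (x y : seq M) (p : nat -> M), size x = na -> size y = nb ->
      (sat (ext (x ++ y) p) psi <-> sat (ext (y ++ x) p) phi).
Proof.
pose rs k := if k < nb then na + k else if k < nb + na then k - nb else k.
exists (fren (fbound phi + na + nb) rs phi); split.
  move=> k nak /ffree_fren [z Hz Ek]; move: nak; rewrite Ek /rs.
  by case: ifP => ?; [lia|case: ifP => ?; [lia|]].
move=> M x y p xn yn; apply: sat_fren => k /ffree_lt_fbound kB; split.
  by rewrite /rs; case: ifP => ?; [lia|case: ifP => ?; lia].
rewrite /ext /rs; case: (ltnP k nb) => kb.
  rewrite !nth_cat xn yn kb ltnNge leq_addr /= addKn.
  by apply: set_nth_default; rewrite yn.
case: (ltnP k (nb + na)) => kba.
  by rewrite !nth_cat xn yn ltn_subLR // kba ltnNge kb; apply: set_nth_default; lia.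
by rewrite !nth_default ?size_cat ?xn ?yn //; lia.
Qed.

Record nonprincipal_ultrafilter := NonprincipalUltrafilter {
  uf :> (nat -> Prop) -> Prop;
  ufT : uf (fun _ => True);
  ufI : forall A B, uf A -> uf B -> uf (fun n => A n /\ B n);
  ufS : forall A B : nat -> Prop, (forall n, A n -> B n) -> uf A -> uf B;
  uf_neq0 : ~ uf (fun _ => False);
  uf_ultra : forall A, uf A \/ uf (fun n => ~ A n);
  uf_cofinite : forall N, uf (fun n => N <= n) }.

Lemma nonprincipal_ultrafilter_exists : inhabited nonprincipal_ultrafilter.
Proof.
have [G [GU sFG]] := filter.ultraFilterLemma filter.eventually_filter.
have GF : filter.ProperFilter G by case: GU.
constructor; unshelve eapply (@NonprincipalUltrafilter G).
- exact: filter.filterT.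
- by move=> A B; apply: filter.filterI.
- by move=> A B; apply: filter.filterS.
- exact: (filter.filter_not_empty G).
- by move=> A; apply: filter.in_ultra_setVsetC.
- by move=> N; apply: sFG; exists N.
Qed.

Section Ultrapower.
Variables (U : nonprincipal_ultrafilter) (L : language) (M : structure L).

Lemma uf_not A : U (fun n => ~ A n) <-> ~ U A.
Proof.
split; last by case: (@uf_ultra U A).
move=> nA HA; apply: (@uf_neq0 U); apply: ufS (ufI nA HA); by move=> n [].
Qed.

Lemma uf_forall k (A : 'I_k -> nat -> Prop) :
  (forall i, U (A i)) -> U (fun n => forall i, A i n).
Proof.
move=> H; suff: U (fun n => forall i, i \in enum 'I_k -> A i n).
  by apply: ufS => n Hn i; apply: Hn; rewrite mem_enum.
elim: (enum 'I_k) => [|x s IH]; first exact: ufS (@ufT U).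
apply: ufS (ufI (H x) IH) => n [H1 H2] i; rewrite inE => /orP [/eqP -> //|].
exact: H2.
Qed.

Definition ueq (f g : nat -> M) : Prop := U (fun n => f n = g n).

(* Elements are represented by their ueq-classes, so that equality in the
   ultrapower is Leibniz equality, as [sat] requires. *)
Definition ucar := {X : (nat -> M) -> Prop | exists f, X = ueq f}.

Definition uclass (f : nat -> M) : ucar := exist _ (ueq f) (ex_intro _ f erefl).

Definition urep (X : ucar) : nat -> M :=
  proj1_sig (constructive_indefinite_description _ (proj2_sig X)).

Lemma uclass_urep X : uclass (urep X) = X.
Proof.
case: X => X HX; rewrite /urep /=; case: constructive_indefinite_description => f Hf.
by rewrite /uclass; move: (ex_intro _ _ _) HX; rewrite -Hf => H1 H2; rewrite (proof_irrelevance _ H1 H2).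
Qed.

Lemma uclass_eq f g : uclass f = uclass g <-> U (fun n => f n = g n).
Proof.
split.
- move=> /(congr1 (@proj1_sig _ _)) /= E.
  have : ueq g g by apply: ufS (@ufT U).
  by rewrite -E.
- move=> H; rewrite /uclass; move: (ex_intro _ f _) (ex_intro _ g _).
  have -> : ueq f = ueq g.
    apply: functional_extensionality => h; apply: propositional_extensionality.
    by split => H'; apply: ufS (ufI H H') => n [E <-].
  by move=> H1 H2; rewrite (proof_irrelevance _ H1 H2).
Qed.

Lemma urep_uclass f : U (fun n => urep (uclass f) n = f n).
Proof. by apply/uclass_eq; rewrite uclass_urep. Qed.

Definition ultrapower : structure L :=
  @Structure L ucar (fun f args => uclass (fun n => fint (fun i => urep (args i) n)))
                    (fun r args => U (fun n => rint (fun i => urep (args i) n))).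

Lemma los_teval (V : nat -> nat -> M) t :
  @teval L ultrapower (fun k => uclass (V k)) t = uclass (fun n => teval (fun k => V k n) t).
Proof.
elim: t => [k|f ts IH] //=; apply/uclass_eq.
apply: ufS (uf_forall (fun i => urep_uclass (fun n => teval (fun k => V k n) (ts i)))) => n Hn.
by f_equal; apply: functional_extensionality => i; rewrite IH; exact: Hn.
Qed.

Theorem los (phi : formula L) (V : nat -> nat -> M) :
  @sat L ultrapower (fun k => uclass (V k)) phi <-> U (fun n => sat (fun k => V k n) phi).
Proof.
elim: phi V => [t u|r ts|p IH|p IHp q IHq|k p IH] V /=.
- by rewrite !los_teval uclass_eq.
- have H := uf_forall (fun i => urep_uclass (fun n => teval (fun k => V k n) (ts i))).
  have E n : (forall i, urep (uclass (fun n => teval (fun k => V k n) (ts i))) n =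
                        teval (fun k => V k n) (ts i)) ->
     (fun i => urep (@teval L ultrapower (fun k => uclass (V k)) (ts i)) n) =
     (fun i => teval (fun k => V k n) (ts i)).
    by move=> Hn; apply: functional_extensionality => i; rewrite los_teval; exact: Hn.
  by split => H'; apply: ufS (ufI H H') => n [/E ->].
- by rewrite IH uf_not.
- rewrite IHp IHq; split; first by case; exact: ufI.
  by move=> H; split; apply: ufS H => n [].
- have E W : @sat L ultrapower (upd (fun j => uclass (V j)) k (uclass W)) p <->
             U (fun n => sat (upd (fun j => V j n) k (W n)) p).
    rewrite (@sat_ext _ ultrapower p _ (fun j => uclass (upd V k W j))); last first.
      by move=> j _; rewrite /upd; case: eqP.
    rewrite IH; split; apply: ufS => n;
      by rewrite (@sat_ext _ M p _ (upd (fun j => V j n) k (W n))) // => j _; rewrite /upd; case: eqP.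
  split.
  + move=> [X]; rewrite -(uclass_urep X) => /E; apply: ufS => n H; by eexists; exact: H.
  + pose W n := if excluded_middle_informative (exists x, sat (upd (fun j => V j n) k x) p)
                 is left e then proj1_sig (constructive_indefinite_description _ e) else V k n.
    move=> H; exists (uclass W); apply/E; apply: ufS H => n Hn; rewrite /W.
    case: excluded_middle_informative => // e.
    by case: constructive_indefinite_description.
Qed.

Definition udiag (x : M) : ultrapower := uclass (fun _ => x).

Lemma udiag_elementary : elementary udiag.
Proof.
move=> phi v; rewrite (los phi (fun k _ => v k)); split.
- by move=> H; apply: ufS (@ufT U).
- by move=> H; apply: NNPP => H'; apply: (@uf_neq0 U); apply: ufS H.
Qed.

Definition ulift k (x : nat -> k.-tuple M) : k.-tuple ultrapower :=
  [tuple uclass (fun n => tnth (x n) j) | j < k].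

Lemma ext_ulift k l (x : nat -> k.-tuple M) (y : nat -> l.-tuple M) (p : nat -> M) j :
  ext (tval (ulift x) ++ tval (ulift y)) (udiag \o p) j =
  uclass (fun n => ext (tval (x n) ++ tval (y n)) p j).
Proof.
rewrite /ext !nth_cat !size_tuple.
case: ltnP => [jk|kj].
  rewrite -[j]/(nat_of_ord (Ordinal jk)) nth_mktuple; apply/uclass_eq.
  by apply: ufS (@ufT U) => n _; rewrite nth_cat size_tuple jk (tnth_nth (p j)).
have [jl|lj] := ltnP (j - k) l.
  rewrite -[j - k]/(nat_of_ord (Ordinal jl)) nth_mktuple; apply/uclass_eq.
  apply: ufS (@ufT U) => n _.
  by rewrite nth_cat size_tuple ltnNge kj /= (tnth_nth (p j)).
rewrite nth_default ?size_tuple //; apply/uclass_eq; apply: ufS (@ufT U) => n _.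
by rewrite nth_default // size_cat !size_tuple; lia.
Qed.

End Ultrapower.

Lemma has_IP_of_finite_patterns (L : language) (M : structure L) (na nb : nat)
  (phi : formula L) (p : nat -> M)
  (c : nat -> na.-tuple M) (d : nat -> (nat -> Prop) -> nb.-tuple M) :
  (forall n i S, i < n -> (sat (ext (tval (c i) ++ tval (d n S)) p) phi <-> S i)) ->
  has_IP na nb phi p.
Proof.
move=> Hcd; have [U] := nonprincipal_ultrafilter_exists.
exists (ultrapower U M), (udiag U (M := M)); split; first exact: udiag_elementary.
exists (fun i => ulift U (fun _ => c i)), (fun S => ulift U (fun n => d n S)) => i S.
rewrite (@sat_ext _ (ultrapower U M) phi _
          (fun k => uclass U (fun n => ext (tval (c i) ++ tval (d n S)) p k)));
  last by move=> k _; exact: ext_ulift.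
rewrite los; split.
- move=> H; apply: NNPP => nS; apply: (@uf_neq0 U).
  apply: ufS (ufI H (@uf_cofinite U i.+1)) => n [Hn ltin].
  by apply: nS; apply/(Hcd n i S ltin).
- by move=> Si; apply: ufS (@uf_cofinite U i.+1) => n ltin; apply/(Hcd n i S ltin).
Qed.

Section FlattenTuples.
Variables (X T : Type) (w : nat) (f : X -> w.-tuple T).

Lemma size_flatten_tuples s : size (flatten [seq tval (f x) | x <- s]) = size s * w.
Proof. by elim: s => //= x s IH; rewrite size_cat size_tuple IH mulSn. Qed.

Lemma nth_flatten_tuples d x0 s z : z < size s * w ->
  nth d (flatten [seq tval (f x) | x <- s]) z = nth d (f (nth x0 s (z %/ w))) (z %% w).
Proof.
elim: s z => //= x s IH z; rewrite mulSn nth_cat size_tuple => zlt.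
case: ltnP => [zw|wz]; first by rewrite modn_small // divn_small.
have w0 : 0 < w by case: w f wz zlt => // f' _; rewrite muln0.
rewrite IH; last by rewrite ltn_subLR.
have Ez : z = z - w + w by rewrite subnK.
by rewrite [in RHS]Ez modnDr divnDr ?dvdnn // divnn w0 addn1.
Qed.

End FlattenTuples.

Lemma concat_fam_nth (I T : Type) (c : I -> seq T) (d : I) (s : seq I) N :
  size s = N -> concat_fam c (fun k : 'I_N => nth d s k) = flatten (map c s).
Proof.
by move=> <-; rewrite /concat_fam -[in RHS](mkseq_nth d s) /mkseq -val_enum_ord -!map_comp.
Qed.

Lemma tp_eq_sat (L : language) (M : structure L) (x y : seq M) phi d :
  tp_eq x y -> (forall k, ffree k phi -> k < size x) ->
  (sat (ext x d) phi <-> sat (ext y d) phi).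
Proof. by move=> [_ H] Hphi; apply: H => k kx /Hphi; rewrite ltnNge kx. Qed.

Definition same_order (xs ys : seq rat) : Prop :=
  size xs = size ys /\
  forall s t, s < size xs -> t < size xs ->
    ((nth 0%R xs s <= nth 0%R xs t)%R <-> (nth 0%R ys s <= nth 0%R ys t)%R).

Lemma same_order_eq xs ys s t : same_order xs ys -> s < size xs -> t < size xs ->
  (nth 0%R xs s = nth 0%R xs t <-> nth 0%R ys s = nth 0%R ys t).
Proof.
move=> [_ H] Hs Ht; have [H1 H2] := (H s t Hs Ht, H t s Ht Hs).
by split=> E; apply/eqP; rewrite eq_le; apply/andP; split; [apply/H1|apply/H2|apply/H1|apply/H2];
  rewrite E.
Qed.

Lemma sorted_same_order xs ys : sorted <%R xs -> sorted <%R ys -> size xs = size ys ->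
  same_order xs ys.
Proof.
move=> sx sy Exy; split => // s t Hs Ht.
by rewrite (lt_sorted_leq_nth 0%R sx) ?(lt_sorted_leq_nth 0%R sy) ?inE -?Exy.
Qed.

(* Entries of a slotted sequence can be chosen independently, each in its own slot,
   without changing the order type. *)
Definition slotted (us : seq rat) : Prop :=
  forall s, s < size us -> (s%:R < nth 0%R us s < s.+1%:R)%R.

Lemma slotted_sorted us : slotted us -> sorted <%R us.
Proof.
move=> H; apply/(sortedP 0%R) => s Hs.
have /andP [_ H1] := H s (ltnW Hs); have /andP [H2 _] := H s.+1 Hs.
exact: lt_trans H1 H2.
Qed.

Lemma slots_disjoint (s k : nat) (x : rat) : s != k ->
  (s%:R < x < s.+1%:R)%R -> ~ (k%:R < x < k.+1%:R)%R.
Proof.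
move=> sk /andP [sx xs] /andP [kx xk].
case: (ltngtP s k) sk => [sltk|klts|_] // _.
- have : (s.+1%:R <= k%:R :> rat)%R by rewrite ler_nat.
  by move/(lt_le_trans xs)/(lt_trans kx); rewrite ltxx.
- have : (k.+1%:R <= s%:R :> rat)%R by rewrite ler_nat.
  by move/(lt_le_trans xk)/(lt_trans sx); rewrite ltxx.
Qed.

Lemma slotted_set_nth us ks u : slotted us -> ks < size us ->
  (ks%:R < u < ks.+1%:R)%R -> slotted (set_nth 0%R us ks u).
Proof.
move=> Hus ksu Hu s; rewrite size_set_nth (maxn_idPr ksu) nth_set_nth /= => Hs.
by case: eqP => [->|_]; [exact: Hu|exact: Hus].
Qed.

Definition points (us ws : seq rat) : seq point := map inl us ++ map inr ws.

Lemma nth_points us ws k : k < size us + size ws ->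
  nth (inl 0%R) (points us ws) k =
  if k < size us then inl (nth 0%R us k) else inr (nth 0%R ws (k - size us)).
Proof.
move=> Hk; rewrite nth_cat size_map; case: ltnP => H; first by rewrite (nth_map 0%R).
by rewrite (nth_map 0%R) // ltn_subLR.
Qed.

Section Layout.
Variables (L : language) (M : structure L) (na nb : nat).
Variables (a : rat -> na.-tuple M) (b : rat -> nb.-tuple M).

Definition layout (us ws : seq rat) : seq M :=
  flatten [seq tval (a u) | u <- us] ++ flatten [seq tval (b w) | w <- ws].

Lemma size_layout us ws : size (layout us ws) = size us * na + size ws * nb.
Proof. by rewrite size_cat !size_flatten_tuples. Qed.

Lemma nth_layout d us ws z : z < size us * na + size ws * nb ->
  nth d (layout us ws) z =
  if z < size us * na then nth d (a (nth 0%R us (z %/ na))) (z %% na)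
  else nth d (b (nth 0%R ws ((z - size us * na) %/ nb))) ((z - size us * na) %% nb).
Proof.
move=> Hz; rewrite nth_cat size_flatten_tuples; case: ltnP => H.
  exact: nth_flatten_tuples.
by apply: nth_flatten_tuples; rewrite ltn_subLR.
Qed.

Lemma layout_concat_fam us ws N : size (points us ws) = N ->
  concat_fam (fam_tuple a b) (fun k : 'I_N => nth (inl 0%R) (points us ws) k) = layout us ws.
Proof. by move=> HN; rewrite (concat_fam_nth _ _ HN) map_cat flatten_cat -!map_comp. Qed.

Definition same_edges (R : rat -> rat -> Prop) (us ws us' ws' : seq rat) : Prop :=
  forall s t, s < size us -> t < size ws ->
    (R (nth 0%R us s) (nth 0%R ws t) <-> R (nth 0%R us' s) (nth 0%R ws' t)).

Lemma Lstar_indisc_layout R us ws us' ws' : Lstar_indisc R a b ->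
  same_order us us' -> same_order ws ws' -> same_edges R us ws us' ws' ->
  tp_eq (layout us ws) (layout us' ws').
Proof.
move=> HL ou ow e; have [Eu Ew] := (ou.1, ow.1).
have EN : size (points us' ws') = size (points us ws) by rewrite !size_cat !size_map Eu Ew.
rewrite -(layout_concat_fam (erefl _)) -(layout_concat_fam EN); apply: HL => k l.
have NE : size (points us ws) = size us + size ws by rewrite size_cat !size_map.
have [kN lN] := (leq_trans (ltn_ord k) (eq_leq NE), leq_trans (ltn_ord l) (eq_leq NE)).
rewrite !nth_points -?Eu -?Ew //.
have inj_iff (T U : Type) (c : T -> U) x y x' y' : injective c ->
    (x = y <-> x' = y') -> (c x = c y <-> c x' = c y').
  by move=> ic [H1 H2]; split=> [/ic/H1|/ic/H2] ->.
case: (ltnP k (size us)) => Hk; case: (ltnP l (size us)) => Hl /=.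
- split=> //; split; last by split=> //; exact: ou.2.
  by apply: inj_iff; [move=> ? ? []|exact: same_order_eq].
- split=> //; split; first by split=> // -[].
  by split=> //; apply: e; lia.
- by do !split.
- have [Hk' Hl'] : k - size us < size ws /\ l - size us < size ws by lia.
  split=> //; split; last by split=> //; exact: ow.2.
  by apply: inj_iff; [move=> ? ? []|exact: same_order_eq].
Qed.

End Layout.

Lemma params_of_nth (M : Type) k (c : rat -> k.-tuple M) q j d :
  j < k -> params_of c (nth d (tval (c q)) j).
Proof. by move=> jk; exists q, (Ordinal jk); rewrite (tnth_nth d). Qed.

Section Absorb.
Variables (L : language) (M : structure L) (nb : nat) (b : rat -> nb.-tuple M).

Lemma absorb_params N phi (p : nat -> M) :
  (forall k, N <= k -> ffree k phi -> params_of b (p k)) ->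
  exists ws theta, (forall k, ffree k theta -> k < N + size ws * nb) /\
    forall x, size x = N ->
      (sat (ext x p) phi <-> sat (ext (x ++ flatten [seq tval (b w) | w <- ws]) p) theta).
Proof.
move=> Hp.
have [sel selP] : exists sel : nat -> rat * nat, forall k, N <= k -> ffree k phi ->
    (sel k).2 < nb /\ p k = nth (p k) (tval (b (sel k).1)) (sel k).2.
  apply: (choice (fun k (qj : rat * nat) => N <= k -> ffree k phi ->
                                            qj.2 < nb /\ p k = nth (p k) (tval (b qj.1)) qj.2)).
  move=> k; case: (classic (N <= k /\ ffree k phi)) => [[Nk /(Hp _ Nk) [q [j ->]]]|H].
  + by exists (q, val j) => _ _; split; [exact: ltn_ord|exact: tnth_nth].
  + by exists (0%R, 0) => Nk Hk; exfalso; apply: H.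
pose m := fbound phi - N.
pose ws := mkseq (fun s => (sel (N + s)).1) m.
pose rho k := if k < N then k else N + (k - N) * nb + (sel k).2.
have blk k : N <= k -> ffree k phi -> (k - N) * nb + (sel k).2 < m * nb.
  move=> Nk Hk; have [jb _] := selP k Nk Hk.
  apply: (@leq_trans ((k - N).+1 * nb)); first by rewrite mulSn; lia.
  by rewrite leq_mul2r; apply/orP; right; have := ffree_lt_fbound Hk; rewrite /m; lia.
have rho_lt k : ffree k phi -> rho k < N + m * nb.
  move=> Hk; rewrite /rho; case: (ltnP k N) => Nk; first lia.
  by have := blk k Nk Hk; lia.
exists ws, (fren (N + m * nb) rho phi); split.
  by move=> k /ffree_fren [j /rho_lt Hj ->]; rewrite size_mkseq.
move=> x Nx; apply: iff_sym; apply: sat_fren => k Hk; split; first exact: rho_lt.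
rewrite /ext /rho; case: (ltnP k N) => Nk; first by rewrite nth_cat Nx Nk.
rewrite nth_cat Nx.
have [jb Ep] := selP k Nk Hk.
have km : k - N < m by have := ffree_lt_fbound Hk; rewrite /m; lia.
rewrite [in RHS]nth_default ?Nx // ltnNge -addnA leq_addr /= addKn.
rewrite (nth_flatten_tuples _ _ 0%R); last first.
  by rewrite size_mkseq blk.
rewrite modnMDl divnMDl; last exact: leq_ltn_trans (leq0n _) jb.
rewrite divn_small // modn_small // addn0 nth_mkseq // subnKC // Ep.
by apply: set_nth_default; rewrite size_tuple.
Qed.

End Absorb.

Section Localize.
Variables (L : language) (M : structure L) (na nb : nat).
Variables (a : rat -> na.-tuple M) (b : rat -> nb.-tuple M).

Lemma nth_layout_params us ws z d : z < size (layout a b us ws) ->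
  params_of a (nth d (layout a b us ws) z) \/ params_of b (nth d (layout a b us ws) z).
Proof.
rewrite size_layout => Hz; rewrite nth_layout //; case: ifP => H; [left|right].
  by apply: params_of_nth; rewrite ltn_pmod //; case: (posnP na) H => // ->; rewrite muln0.
apply: params_of_nth; rewrite ltn_pmod //.
by case: (posnP nb) Hz => // ->; rewrite muln0 addn0 H.
Qed.

Variables (m0 : M) (theta : formula L) (us ws : seq rat) (ks : nat) (wst : rat).
Hypothesis theta_free : forall z, ffree z theta -> z < size us * na + size ws * nb.
Hypothesis ksu : ks < size us.

Let NA := size us * na.

(* Entries of block ks of us become the variables x, entries of the blocks b_wst become
   the variables y, and every other entry z becomes the parameter x_(na + nb + z). *)
Let rho z := if z < NA then (if z %/ na == ks then z %% na else na + nb + z)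
             else if nth 0%R ws ((z - NA) %/ nb) == wst then na + (z - NA) %% nb
             else na + nb + z.

Let p k := nth m0 (layout a b us ws) (k - (na + nb)).

Let na_gt0 z : z < NA -> 0 < na.
Proof. by rewrite lt0n; apply: contraTneq => na0; rewrite /NA na0 muln0. Qed.

Let nb_gt0 z : NA <= z -> z < NA + size ws * nb -> 0 < nb.
Proof. by move=> NAz; rewrite lt0n; apply: contraTneq => nb0; rewrite nb0 muln0 addn0 -leqNgt. Qed.

Let rho_lt z : ffree z theta -> rho z < na + nb + (NA + size ws * nb).
Proof.
move=> /theta_free zN; rewrite /rho; case: (ltnP z NA) => zNA; case: ifP => _.
- by have := ltn_pmod z (na_gt0 zNA); lia.
- by lia.
- by have := ltn_pmod (z - NA) (nb_gt0 zNA zN); lia.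
- by lia.
Qed.

Let rho_param z : ffree z theta -> na + nb <= rho z -> p (rho z) = nth m0 (layout a b us ws) z.
Proof.
move=> /theta_free zN; rewrite /rho /p; case: (ltnP z NA) => zNA; case: ifP => _;
  rewrite ?addKn //.
- by have := ltn_pmod z (na_gt0 zNA); lia.
- by have := ltn_pmod (z - NA) (nb_gt0 zNA zN); lia.
Qed.

Let ext_rho u v z : ffree z theta ->
  ext (tval (a u) ++ tval (b v)) p (rho z) =
  nth m0 (layout a b (set_nth 0%R us ks u) [seq if w == wst then v else w | w <- ws]) z.
Proof.
move=> Hz; have zN := theta_free Hz.
have param_case : rho z = na + nb + z -> ext (tval (a u) ++ tval (b v)) p (rho z) =
                                          nth m0 (layout a b us ws) z.
  move=> Erho; rewrite /ext nth_default ?size_cat ?size_tuple ?Erho ?leq_addr //.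
  by rewrite -Erho rho_param // Erho leq_addr.
rewrite nth_layout size_set_nth (maxn_idPr ksu) ?size_map //; rewrite -/NA in zN *.
case: (ltnP z NA) => zNA.
  rewrite nth_set_nth /=; case: eqP => E.
    have -> : rho z = z %% na by rewrite /rho zNA E eqxx.
    rewrite /ext nth_cat size_tuple ltn_pmod ?(na_gt0 zNA) //.
    by apply: set_nth_default; rewrite size_tuple ltn_pmod ?(na_gt0 zNA).
  rewrite param_case; first by rewrite nth_layout // -/NA zNA.
  by rewrite /rho zNA; case: eqP.
have blk : (z - NA) %/ nb < size ws by rewrite ltn_divLR ?(nb_gt0 zNA zN) // ltn_subLR.
rewrite (nth_map 0%R) //; case: eqP => E.
  have -> : rho z = na + (z - NA) %% nb by rewrite /rho ltnNge zNA /= E eqxx.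
  rewrite /ext nth_cat size_tuple ltnNge leq_addr /= addKn.
  by apply: set_nth_default; rewrite size_tuple ltn_pmod ?(nb_gt0 zNA zN).
rewrite param_case; first by rewrite nth_layout // -/NA ltnNge zNA.
by rewrite /rho ltnNge zNA /=; case: eqP.
Qed.

Lemma localize :
  exists psi p,
    (forall k, na + nb <= k -> ffree k psi -> params_of a (p k) \/ params_of b (p k)) /\
    forall u v d, sat (ext (tval (a u) ++ tval (b v)) p) psi <->
      sat (ext (layout a b (set_nth 0%R us ks u) [seq if w == wst then v else w | w <- ws]) d)
          theta.
Proof.
exists (fren (na + nb + (NA + size ws * nb)) rho theta), p; split.
  move=> k nak /ffree_fren [z Hz Ek]; rewrite Ek in nak *; rewrite rho_param //.
  by apply: nth_layout_params; rewrite size_layout; exact: theta_free.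
move=> u v d; apply: sat_fren => z Hz; split; first exact: rho_lt.
rewrite ext_rho // /ext (set_nth_default m0) // size_layout size_set_nth (maxn_idPr ksu).
by rewrite size_map; exact: theta_free.
Qed.

End Localize.

Lemma separating_interval (ws : seq rat) (w : rat) : exists lo hi, (lo < w < hi)%R /\
  forall x, x \in ws -> x <> w -> (x <= lo)%R \/ (hi <= x)%R.
Proof.
elim: ws => [|x ws [lo [hi [/andP [lw wh] Hsep]]]].
  by exists (w - 1)%R, (w + 1)%R; rewrite ltrBlDr ltrDl ltr01.
case: (ltgtP x w) => E.
- exists (Num.max lo x), hi; split; first by rewrite gt_max lw E wh.
  move=> y; rewrite inE => /orP [/eqP ->|Hy] Hn; first by left; rewrite le_max lexx orbT.
  by case: (Hsep y Hy Hn) => H; [left; rewrite le_max H|right].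
- exists lo, (Num.min hi x); split; first by rewrite lt_min lw wh E.
  move=> y; rewrite inE => /orP [/eqP ->|Hy] Hn; first by right; rewrite ge_min lexx orbT.
  by case: (Hsep y Hy Hn) => H; [left|right; rewrite ge_min H].
- exists lo, hi; split; first by rewrite lw wh.
  by move=> y; rewrite inE => /orP [/eqP ->|Hy] Hn //; exact: Hsep.
Qed.

Lemma same_order_replace (ws : seq rat) (wst v lo hi : rat) :
  (lo < wst < hi)%R -> (lo < v < hi)%R ->
  (forall x, x \in ws -> x <> wst -> (x <= lo)%R \/ (hi <= x)%R) ->
  same_order ws [seq if w == wst then v else w | w <- ws].
Proof.
move=> /andP [lw wh] /andP [lv vh] Hsep; split; first by rewrite size_map.
move=> s t Hs Ht; rewrite !(nth_map 0%R) //.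
have [x_in y_in] := (mem_nth 0%R Hs, mem_nth 0%R Ht).
move: (nth 0%R ws s) (nth 0%R ws t) x_in y_in => x y x_in y_in.
case: (eqVneq x wst) => [->|/eqP xw]; case: (eqVneq y wst) => [->|/eqP yw] //.
- case: (Hsep y y_in yw) => yb.
  + by split=> H; exfalso; move: (le_trans H yb); rewrite leNgt ?lv ?lw.
  + by split=> _; apply: ltW; apply: lt_le_trans yb.
- case: (Hsep x x_in xw) => xb.
  + by split=> _; apply: ltW; apply: le_lt_trans xb _.
  + by split=> H; exfalso; move: (le_trans xb H); rewrite leNgt ?vh ?wh.
Qed.

Lemma injective_seq_in_interval (lu hu : rat) (Q : rat -> Prop) :
  (forall h, (lu < h)%R -> exists u, (lu < u < h)%R /\ Q u) -> (lu < hu)%R ->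
  exists u : nat -> rat, (forall i, (lu < u i < hu)%R /\ Q (u i)) /\ injective u.
Proof.
move=> HQ luhu.
have [pick pickP] : exists pick : rat -> rat, forall h, (lu < h)%R -> (lu < pick h < h)%R /\ Q (pick h).
  apply: (choice (fun h u => (lu < h)%R -> (lu < u < h)%R /\ Q u)) => h.
  case: (boolP (lu < h)%R) => [/HQ [u Hu]|_]; by [exists u | exists h].
pose u i := iter i.+1 pick hu.
have uP i : (lu < u i < (if i is i'.+1 then u i' else hu))%R /\ Q (u i).
  elim: i => [|i [/andP [IH _] _]]; exact: pickP.
have u_lt i : (lu < u i < hu)%R.
  elim: i => [|i /andP [_ IH]]; first by case: (uP 0).
  by have [/andP [-> H] _] := uP i.+1; exact: lt_trans H IH.
have u_dec i j : i < j -> (u j < u i)%R.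
  elim: j => // j IH; rewrite ltnS leq_eqVlt => /orP [/eqP ->|/IH H].
    by case: (uP j.+1) => /andP [].
  by case: (uP j.+1) => /andP [_ H'] _; exact: lt_trans H' H.
exists u; split; first by move=> i; split; [exact: u_lt|exact: (uP i).2].
by move=> i j E; case: (ltngtP i j) => // /u_dec; rewrite E ltxx.
Qed.

Section RandomGraph.
Variables (R : rat -> rat -> Prop).
Hypothesis HR : random_obg R.

Lemma slotted_realize n (ws : seq rat) (pi : nat -> rat -> Prop) :
  exists us, [/\ size us = n, slotted us &
    forall s w, s < n -> w \in ws -> (R (nth 0%R us s) w <-> pi s w)].
Proof.
have [f fP] : exists f : nat -> rat, forall s,
    (s%:R < f s < s.+1%:R)%R /\ forall w, w \in ws -> (R (f s) w <-> pi s w).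
  apply: (choice (fun s (x : rat) => (s%:R < x < s.+1%:R)%R /\ forall w, w \in ws -> (R x w <-> pi s w))).
  move=> s; have [||x [Hx [H1 H2]]] := HR.1 s%:R%R s.+1%:R%R _ [seq w <- ws | boolp.asbool (pi s w)]
                                         [seq w <- ws | ~~ boolp.asbool (pi s w)].
  - by rewrite ltr_nat.
  - by move=> w; rewrite !mem_filter => /andP [-> _] /andP [].
  exists x; split => // w Hw; split => [Rxw|].
    by apply/boolp.asboolP; apply: contraPT Rxw => nP; apply: H2; rewrite mem_filter nP.
  by move=> /boolp.asboolP pw; apply: H1; rewrite mem_filter pw.
exists (mkseq f n); rewrite size_mkseq; split => //.
  by move=> s; rewrite size_mkseq => Hs; rewrite nth_mkseq //; case: (fP s).
by move=> s w Hs Hw; rewrite nth_mkseq //; apply: (fP s).2.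
Qed.

End RandomGraph.

Section EdgeBox.
Variables (L : language) (M : structure L) (R : rat -> rat -> Prop) (na nb : nat).
Variables (a : rat -> na.-tuple M) (b : rat -> nb.-tuple M).

Definition params_from (psi : formula L) (p : nat -> M) : Prop :=
  forall k, na + nb <= k -> ffree k psi -> params_of a (p k) \/ params_of b (p k).

(* psi(a_u; b_v) defines R(u, v) for u in (lu, hu) and v in (lv, hv) whose edges to
   finitely many vertices outside these intervals are prescribed: u is joined to VB1
   and not to VB2, v is joined to UA1 and not to UA2. *)
Definition edge_box (psi : formula L) (p : nat -> M) : Prop :=
  exists (lu hu lv hv : rat) (UA1 UA2 VB1 VB2 : seq rat),
    [/\ (lu < hu)%R, (lv < hv)%R,
        {in UA1, forall x, x \notin UA2} & {in VB1, forall y, y \notin VB2}] /\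
    {in UA1 ++ UA2, forall x, ~ (lu < x < hu)%R} /\ {in VB1 ++ VB2, forall y, ~ (lv < y < hv)%R} /\
    forall u v, (lu < u < hu)%R -> (lv < v < hv)%R ->
      (forall y, y \in VB1 -> R u y) -> (forall y, y \in VB2 -> ~ R u y) ->
      (forall x, x \in UA1 -> R x v) -> (forall x, x \in UA2 -> ~ R x v) ->
      (sat (ext (tval (a u) ++ tval (b v)) p) psi <-> R u v).

Lemma has_IP_of_edge_box psi p : random_obg R -> edge_box psi p -> has_IP na nb psi p.
Proof.
move=> HR [lu [hu [lv [hv [UA1 [UA2 [VB1 [VB2 [[luhu lvhv dUA dVB] [oUA [oVB Hbox]]]]]]]]]]].
have [u [uP u_inj]] : exists u : nat -> rat, (forall i, (lu < u i < hu)%R /\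
    (forall y, y \in VB1 -> R (u i) y) /\ (forall y, y \in VB2 -> ~ R (u i) y)) /\ injective u.
  apply: (@injective_seq_in_interval lu hu (fun u => (forall y, y \in VB1 -> R u y) /\
                                             (forall y, y \in VB2 -> ~ R u y))) luhu => h lh.
  have [|u' Hu'] := HR.1 lu h lh VB1 VB2; [by move=> y /dVB /negP|by exists u'].
have u_lt i : (lu < u i < hu)%R by case: (uP i).
pose B1 n S := UA1 ++ [seq u i | i <- iota 0 n & boolp.asbool (S i)].
pose B2 n S := UA2 ++ [seq u i | i <- iota 0 n & ~~ boolp.asbool (S i)].
have [v vP] : exists v : nat * (nat -> Prop) -> rat, forall nS, (lv < v nS < hv)%R /\
    (forall x, x \in B1 nS.1 nS.2 -> R x (v nS)) /\ (forall x, x \in B2 nS.1 nS.2 -> ~ R x (v nS)).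
  apply: (choice (fun nS (v : rat) => (lv < v < hv)%R /\
    (forall x, x \in B1 nS.1 nS.2 -> R x v) /\ (forall x, x \in B2 nS.1 nS.2 -> ~ R x v))).
  move=> [n S]; have [|v Hv] := HR.2 lv hv lvhv (B1 n S) (B2 n S); last by exists v.
  move=> x; rewrite !mem_cat => /orP [x1|/mapP [i Hi ->]] /orP [x2|/mapP [j Hj E]].
  - by move: (dUA x x1); rewrite x2.
  - by apply: oUA (u_lt j); rewrite mem_cat -E x1.
  - by apply: oUA (u_lt i); rewrite mem_cat x2 orbT.
  - by move: Hi Hj; rewrite !mem_filter (u_inj _ _ E) => /andP [-> _] /andP [].
apply: (has_IP_of_finite_patterns (c := fun i => a (u i)) (d := fun n S => b (v (n, S)))).
move=> n i S ltin.
have [vb [vB1 vB2]] := vP (n, S); have [_ [uB1 uB2]] := uP i.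
have in_iota : i \in iota 0 n by rewrite mem_iota.
have vUA1 x : x \in UA1 -> R x (v (n, S)) by move=> x1; apply: vB1; rewrite mem_cat x1.
have vUA2 x : x \in UA2 -> ~ R x (v (n, S)) by move=> x2; apply: vB2; rewrite mem_cat x2.
rewrite Hbox //.
split => [Ruv|Si].
  apply: NNPP => nS; apply: vB2 Ruv; rewrite mem_cat map_f ?orbT //.
  by rewrite mem_filter in_iota andbT; apply/boolp.asboolPn.
by apply: vB1; rewrite mem_cat map_f ?orbT // mem_filter in_iota andbT; apply/boolp.asboolP.
Qed.

Lemma edge_box_of_local psi p (us ws : seq rat) ks wst lo hi :
  slotted us -> ks < size us -> (lo < wst < hi)%R ->
  (forall x, x \in ws -> x <> wst -> (x <= lo)%R \/ (hi <= x)%R) ->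
  (forall u v, (ks%:R < u < ks.+1%:R)%R -> (lo < v < hi)%R ->
     (forall w, w \in ws -> w <> wst -> (R u w <-> R (nth 0%R us ks) w)) ->
     (forall s, s < size us -> s <> ks -> (R (nth 0%R us s) v <-> R (nth 0%R us s) wst)) ->
     (sat (ext (tval (a u) ++ tval (b v)) p) psi <-> R u v)) ->
  edge_box psi p.
Proof.
move=> slus ksu Hlh Hsep Hloc.
pose sides s := (s != ks) && boolp.asbool (R (nth 0%R us s) wst).
pose sides' s := (s != ks) && ~~ boolp.asbool (R (nth 0%R us s) wst).
pose sidew w := (w != wst) && boolp.asbool (R (nth 0%R us ks) w).
pose sidew' w := (w != wst) && ~~ boolp.asbool (R (nth 0%R us ks) w).
pose idx := iota 0 (size us).
exists ks%:R%R, ks.+1%:R%R, lo, hi, [seq nth 0%R us s | s <- idx & sides s],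
  [seq nth 0%R us s | s <- idx & sides' s], [seq w <- ws | sidew w], [seq w <- ws | sidew' w].
split; [split|split; [|split]].
- by rewrite ltr_nat.
- by case/andP: Hlh; apply: lt_trans.
- move=> x /mapP [s1 Hs1 ->]; apply/negP => /mapP [s2 Hs2 E].
  move: Hs1 Hs2; rewrite !mem_filter /sides /sides' E.
  by move=> /andP [/andP [_ /boolp.asboolP ?] _] /andP [/andP [_ /boolp.asboolPn]].
- move=> y; rewrite !mem_filter /sidew /sidew' => /andP [/andP [_ /boolp.asboolP ?] _].
  by apply/negP => /andP [/andP [_ /boolp.asboolPn]].
- move=> x; rewrite mem_cat => /orP [] /mapP [s]; rewrite mem_filter mem_iota add0n leq0n /=;
    by move=> /andP [/andP [sk _] Hs] ->; apply: slots_disjoint sk _; apply: slus.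
- move=> y; rewrite mem_cat !mem_filter /sidew /sidew'.
  move=> /orP [] /andP [/andP [/eqP yw _] yin] /andP [loy yhi];
    by case: (Hsep y yin yw) => H; [move: (le_lt_trans H loy)|move: (lt_le_trans yhi H)]; rewrite ltxx.
move=> u v Hu Hv HVB1 HVB2 HUA1 HUA2; apply: Hloc => // [w Hw /eqP wk|s Hs /eqP sk].
  split => [Ruw|R1w].
    apply: NNPP => nR; apply: (HVB2 w) Ruw.
    by rewrite mem_filter /sidew' wk Hw andbT; apply/boolp.asboolPn.
  by apply: HVB1; rewrite mem_filter /sidew wk Hw andbT; apply/boolp.asboolP.
have s_in : s \in idx by rewrite mem_iota.
split => [Rsv|Rsw].
  apply: NNPP => nR; apply: (HUA2 (nth 0%R us s)) Rsv; apply: map_f.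
  by rewrite mem_filter /sides' sk s_in andbT; apply/boolp.asboolPn.
by apply: HUA1; apply: map_f; rewrite mem_filter /sides sk s_in andbT; apply/boolp.asboolP.
Qed.

End EdgeBox.

Lemma not_iff_step (f : nat -> Prop) N :
  ~ (f 0 <-> f N) -> exists2 t, t < N & ~ (f t <-> f t.+1).
Proof.
elim: N => [|N IH] H; first by exfalso; apply: H.
case: (classic (f N <-> f N.+1)) => E; last by exists N.
have [|t tN Ht] := IH; first by move=> E'; apply: H; rewrite E'.
by exists t => //; apply: ltnW.
Qed.

Lemma replaced_edges (R : rat -> rat -> Prop) (us X ws : seq rat) ks wst u v :
  size X = size us -> ks < size us ->
  (forall w, w \in ws -> w <> wst -> (R u w <-> R (nth 0%R us ks) w)) ->
  (forall s, s < size us -> s <> ks -> (R (nth 0%R us s) v <-> R (nth 0%R us s) wst)) ->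
  (forall s w, s < size us -> w \in ws -> (s, w) <> (ks, wst) ->
     (R (nth 0%R us s) w <-> R (nth 0%R X s) w)) ->
  (R u v <-> R (nth 0%R X ks) wst) ->
  same_edges R X ws (set_nth 0%R us ks u) [seq if w == wst then v else w | w <- ws].
Proof.
move=> EX ksu Hu Hv agree Huv s t; rewrite EX => Hs Ht; apply: iff_sym.
have w_in := mem_nth 0%R Ht.
rewrite nth_set_nth (nth_map 0%R) //=.
case: (eqVneq s ks) => [->|sk]; case: (eqVneq (nth 0%R ws t) wst) => [wE|wk];
  rewrite ?wE ?eqxx ?(negbTE wk) //.
- rewrite (Hu _ w_in); last exact/eqP.
  by apply: agree => // /(congr1 snd) /eqP; rewrite (negbTE wk).
- rewrite (Hv _ Hs); last exact/eqP.
  by rewrite -wE; apply: agree => // /(congr1 fst) /eqP; rewrite (negbTE sk).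
- by apply: agree => // /(congr1 fst) /eqP; rewrite (negbTE sk).
Qed.

Section Flip.
Variables (L : language) (M : structure L) (R : rat -> rat -> Prop) (na nb : nat).
Variables (a : rat -> na.-tuple M) (b : rat -> nb.-tuple M).
Hypothesis HR : random_obg R.
Hypothesis HL : Lstar_indisc R a b.
Variables (n : nat) (ws : seq rat) (theta : formula L) (d : nat -> M).
Hypothesis theta_free : forall z, ffree z theta -> z < n * na + size ws * nb.

Lemma sat_layout_same_type us us' ws' : size us = n ->
  same_order us us' -> same_order ws ws' -> same_edges R us ws us' ws' ->
  (sat (ext (layout a b us ws) d) theta <-> sat (ext (layout a b us' ws') d) theta).
Proof.
move=> usn ou ow e; apply: tp_eq_sat; first exact: (Lstar_indisc_layout HL ou ow e).
by move=> z /theta_free; rewrite size_layout usn.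
Qed.

Definition holds_at us := sat (ext (layout a b us ws) d) theta.

Lemma holds_at_same_edges us us' : size us = n -> size us' = n ->
  sorted <%R us -> sorted <%R us' ->
  (forall s w, s < n -> w \in ws -> (R (nth 0%R us s) w <-> R (nth 0%R us' s) w)) ->
  (holds_at us <-> holds_at us').
Proof.
move=> usn us'n sus sus' e; apply: sat_layout_same_type => //.
- by apply: sorted_same_order; rewrite ?usn.
- by move=> s t; rewrite usn => Hs Ht; apply: e; rewrite ?mem_nth.
Qed.

Lemma flip_edge xs ys : size xs = n -> size ys = n -> sorted <%R xs -> sorted <%R ys ->
  ~ (holds_at xs <-> holds_at ys) ->
  exists us1 us2 ks wst,
    [/\ size us1 = n, size us2 = n, slotted us1 & slotted us2] /\
    [/\ ks < n, wst \in ws,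
        forall s w, s < n -> w \in ws -> (s, w) <> (ks, wst) ->
          (R (nth 0%R us1 s) w <-> R (nth 0%R us2 s) w) &
        ~ (holds_at us1 <-> holds_at us2)].
Proof.
move=> xsn ysn sxs sys Hxy.
pose E := [seq (s, w) | s <- iota 0 n, w <- undup ws].
pose pi t s w := if (s, w) \in take t E then R (nth 0%R ys s) w else R (nth 0%R xs s) w.
have [ureal urealP] := choice _ (fun t => slotted_realize HR n ws (pi t)).
have ureal_holds t us : size us = n -> sorted <%R us ->
    (forall s w, s < n -> w \in ws -> (R (nth 0%R us s) w <-> pi t s w)) ->
    (holds_at (ureal t) <-> holds_at us).
  move=> usn sus Hus; have [un uslot uR] := urealP t.
  apply: holds_at_same_edges => // [|s w Hs Hw]; first exact: slotted_sorted.
  by rewrite uR // Hus.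
have H0 : holds_at (ureal 0) <-> holds_at xs.
  by apply: ureal_holds => // s w _ _; rewrite /pi take0 in_nil.
have HE : holds_at (ureal (size E)) <-> holds_at ys.
  apply: ureal_holds => // s w Hs Hw.
  by rewrite /pi take_size allpairs_f // ?mem_iota ?mem_undup.
have [t tE Ht] : exists2 t, t < size E & ~ (holds_at (ureal t) <-> holds_at (ureal t.+1)).
  by apply: not_iff_step; rewrite H0 HE.
have /allpairsP [[ks wst] [/= ks_in wst_in kwE]] := mem_nth (0, 0%R) tE.
have [un1 uslot1 uR1] := urealP t; have [un2 uslot2 uR2] := urealP t.+1.
exists (ureal t), (ureal t.+1), ks, wst; split=> //; split=> //.
- by rewrite mem_iota in ks_in.
- by rewrite mem_undup in wst_in.
- move=> s w Hs Hw Ne; rewrite uR1 // uR2 // /pi (take_nth (0, 0%R) tE) mem_rcons in_cons kwE.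
  by have /negbTE -> : (s, w) != (ks, wst) by apply/eqP.
Qed.

Lemma edge_box_of_flip (m0 : M) us1 us2 ks wst :
  [/\ size us1 = n, size us2 = n, slotted us1 & slotted us2] ->
  [/\ ks < n, wst \in ws,
      forall s w, s < n -> w \in ws -> (s, w) <> (ks, wst) ->
        (R (nth 0%R us1 s) w <-> R (nth 0%R us2 s) w) &
      ~ (holds_at us1 <-> holds_at us2)] ->
  exists psi p, params_from a b psi p /\ edge_box R a b psi p.
Proof.
move=> [un1 un2 sl1 sl2] [ksn wst_in agree differ_holds].
have differ : ~ (R (nth 0%R us1 ks) wst <-> R (nth 0%R us2 ks) wst).
  move=> E; apply: differ_holds; apply: holds_at_same_edges; rewrite ?slotted_sorted //.
  move=> s w Hs Hw; case: (classic ((s, w) = (ks, wst))) => [[-> ->] //|]; exact: agree.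
have ksu : ks < size us1 by rewrite un1.
have theta_free1 z : ffree z theta -> z < size us1 * na + size ws * nb by rewrite un1; exact: theta_free.
have [psi0 [p [Hpar Hloc]]] := localize a b m0 wst theta_free1 ksu.
have [lo [hi [Hlh Hsep]]] := separating_interval ws wst.
pose beta := R (nth 0%R us1 ks) wst.
exists (if boolp.asbool (beta <-> holds_at us1) then psi0 else Negf psi0), p; split.
  by move=> k Hk Hf; apply: Hpar => //; move: Hf; case: ifP.
apply: (edge_box_of_local sl1 ksu Hlh Hsep) => u v Hu Hv Hu' Hv'.
have holds_X X : size X = n -> slotted X ->
    (forall s w, s < n -> w \in ws -> (s, w) <> (ks, wst) ->
       (R (nth 0%R us1 s) w <-> R (nth 0%R X s) w)) ->
    (R u v <-> R (nth 0%R X ks) wst) ->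
    (sat (ext (tval (a u) ++ tval (b v)) p) psi0 <-> holds_at X).
  move=> Xn slX agX HuvX; rewrite Hloc; apply: iff_sym; apply: sat_layout_same_type => //.
  - apply: sorted_same_order; rewrite ?slotted_sorted ?size_set_nth ?Xn ?un1 ?(maxn_idPr ksn) //.
    by apply: slotted_set_nth; rewrite ?un1.
  - exact: same_order_replace Hlh Hv Hsep.
  - by apply: replaced_edges => //; rewrite un1.
(* psi0 follows holds_at us1 or holds_at us2 according as R u v agrees with beta;
   as these truth values differ, psi0 or its negation defines R u v. *)
have [E|NE] := classic (R u v <-> beta).
- have := holds_X us1 un1 sl1 (fun _ _ _ _ _ => iff_refl _) E.
  by case: (boolp.asboolP (beta <-> holds_at us1)) => Hb /=; tauto.
- have := holds_X us2 un2 sl2 agree ltac:(rewrite /beta in NE; tauto).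
  by case: (boolp.asboolP (beta <-> holds_at us1)) => Hb /=; rewrite /beta in Hb *; tauto.
Qed.

End Flip.

Lemma sorted_increasing n (i : 'I_n -> rat) :
  (forall k l : 'I_n, k < l -> (i k < i l)%R) -> sorted <%R [seq i k | k <- enum 'I_n].
Proof.
move=> Hi; rewrite sorted_map; apply: (sub_sorted (e := relpre val ltn)) => [k l /= /Hi //|].
by rewrite -sorted_map val_enum_ord iota_ltn_sorted.
Qed.

Section NotIndiscernible.
Variables (L : language) (M : structure L) (R : rat -> rat -> Prop) (na nb : nat).
Variables (a : rat -> na.-tuple M) (b : rat -> nb.-tuple M).
Hypothesis HR : random_obg R.
Hypothesis HL : Lstar_indisc R a b.

Lemma size_concat_fam_tuples k (c : rat -> k.-tuple M) n (i : 'I_n -> rat) :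
  size (concat_fam (fun q => tval (c q)) i) = n * k.
Proof. by rewrite /concat_fam -map_comp size_flatten_tuples -enumT size_enum_ord. Qed.

Lemma edge_box_of_not_indisc : ~ indisc_over (params_of b) a ->
  exists psi p, params_from a b psi p /\ edge_box R a b psi p.
Proof.
move=> Hn.
have [n [i [j [Hi [Hj [phi [p [Hp Hneq]]]]]]]] : exists n (i j : 'I_n -> rat),
    (forall k l : 'I_n, k < l -> (i k < i l)%R) /\ (forall k l : 'I_n, k < l -> (j k < j l)%R) /\
    exists phi p, (forall k, n * na <= k -> ffree k phi -> params_of b (p k)) /\
      ~ (sat (ext (concat_fam (fun q => tval (a q)) i) p) phi <->
         sat (ext (concat_fam (fun q => tval (a q)) j) p) phi).
  apply: NNPP => H; apply: Hn => n i j Hi Hj; split; first by rewrite !size_concat_fam_tuples.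
  move=> phi p Hp; apply: NNPP => Hne; apply: H; exists n, i, j; do 2 split => //.
  by exists phi, p; split => // k nk; apply: Hp; rewrite size_concat_fam_tuples.
have [ws [theta [theta_free Htheta]]] := absorb_params Hp.
have holds_concat (i' : 'I_n -> rat) :
    sat (ext (concat_fam (fun q => tval (a q)) i') p) phi <->
    holds_at a b ws theta p [seq i' k | k <- enum 'I_n].
  by rewrite Htheta ?size_concat_fam_tuples // /holds_at /layout /concat_fam -map_comp.
have size_xs (i' : 'I_n -> rat) : size [seq i' k | k <- enum 'I_n] = n by rewrite size_map size_enum_ord.
have [us1 [us2 [ks [wst [Hus Hflip]]]]] :=
  flip_edge (d := p) HR HL theta_free (size_xs i) (size_xs j) (sorted_increasing Hi) (sorted_increasing Hj)
    ltac:(by move=> H; apply: Hneq; rewrite !holds_concat).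
exact: (edge_box_of_flip (d := p) HL theta_free (p 0) Hus Hflip).
Qed.

End NotIndiscernible.

Lemma random_obg_sym R : random_obg R -> random_obg (fun x y => R y x).
Proof. by case=> hU hV; split. Qed.

Definition swap_point (x : point) : point :=
  match x with inl q => inr q | inr q => inl q end.

Section Symmetry.
Variables (L : language) (M : structure L) (R : rat -> rat -> Prop) (na nb : nat).
Variables (a : rat -> na.-tuple M) (b : rat -> nb.-tuple M).

Lemma Lstar_indisc_sym : Lstar_indisc R a b -> Lstar_indisc (fun x y => R y x) b a.
Proof.
move=> HL n t s Hq.
have E (t' : 'I_n -> point) :
    concat_fam (fam_tuple b a) t' = concat_fam (fam_tuple a b) (fun k => swap_point (t' k)).
  by rewrite /concat_fam; congr flatten; apply: eq_map => k; case: (t' k).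
rewrite !E; apply: HL => k l.
have [h1 [h2 [h3 h4]]] := Hq k l; have [_ [_ [_ h4']]] := Hq l k.
have isw x : isU (swap_point x) <-> ~ isU x by case: x => q /=; tauto.
have esw x y : swap_point x = swap_point y <-> x = y by case: x y => [x|x] [y|y]; split => // -[->].
have lsw x y : le_pt (swap_point x) (swap_point y) <-> le_pt x y by case: x y => [x|x] [y|y].
have rsw x y : R_pt R (swap_point x) (swap_point y) <-> R_pt (fun x y => R y x) y x.
  by case: x y => [x|x] [y|y].
by rewrite !isw !esw !lsw !rsw; do !split => //; tauto.
Qed.

Lemma edge_box_sym psi' p : params_from b a psi' p -> edge_box (fun x y => R y x) b a psi' p ->
  exists psi, params_from a b psi p /\ edge_box R a b psi p.
Proof.
move=> Hpar [lv [hv [lu [hu [VB1 [VB2 [UA1 [UA2 [[lvhv luhu dVB dUA] [oVB [oUA Hbox]]]]]]]]]]].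
have [psi [psi_free psiE]] := swap_blocks psi' na nb.
exists psi; split.
  by move=> k nak /(psi_free _ nak) Hk; case: (Hpar k _ Hk); [lia|right|left].
exists lu, hu, lv, hv, UA1, UA2, VB1, VB2; split=> //; split=> //; split=> //.
move=> u v Hu Hv HVB1 HVB2 HUA1 HUA2.
by rewrite psiE ?size_tuple //; apply: Hbox.
Qed.

End Symmetry.

Theorem lemma2 (L : language) (M : structure L) (R : rat -> rat -> Prop)
  (na nb : nat) (a : rat -> na.-tuple M) (b : rat -> nb.-tuple M) :
  random_obg R ->
  Lstar_indisc R a b ->
  mutually_indisc a b \/
  exists (phi : formula L) (p : nat -> M),
    (forall k, (na + nb <= k)%N -> ffree k phi ->
       params_of a (p k) \/ params_of b (p k)) /\
    has_IP na nb phi p.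
Proof.
move=> HR HL; case: (classic (mutually_indisc a b)) => [|not_mutual]; [by left|right].
have [psi [p [Hpar Hbox]]] : exists psi p, params_from a b psi p /\ edge_box R a b psi p.
  case: (classic (indisc_over (params_of b) a)) => Ha; last exact: edge_box_of_not_indisc.
  have [psi' [p [Hpar' Hbox']]] :=
    edge_box_of_not_indisc (random_obg_sym HR) (Lstar_indisc_sym HL) (fun Hb => not_mutual (conj Ha Hb)).
  by have [psi Hpsi] := edge_box_sym Hpar' Hbox'; exists psi, p.
by exists psi, p; split; [exact: Hpar|exact: (has_IP_of_edge_box HR Hbox)].
Qed.
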